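(* There is a universal constant $A>0$ such that the following holds. Let $N\ge6$ be even and consider the balanced Bernoulli–Laplace chain with $N_1=N_2=N_w=N_b=N/2$. For every $c>0$ and every integer $$m\ \ge\ \tfrac14 N\log N+\Big(\tfrac c2-\tfrac{\log 2}{8}\Big)N,$$ we have $$E_\pi\big[\|\rho_m(j;\cdot)-\pi\|_V\big]:=\sum_{j=0}^{N/2}\pi_j\,\|\rho_m(j;\cdot)-\pi\|_V\ \le\ A\,e^{-2c}.$$
   Context: Balanced Bernoulli–Laplace model: $N$ even, two urns each containing $N/2$ balls, $N/2$ white and $N/2$ black balls in total; the state $i\in\{0,\dots,N/2\}$ is the number of white balls in urn 1. At each step one ball is drawn uniformly from each urn and the two are swapped, giving transition probabilities $p_i=\frac{4(N/2-i)^2}{N^2}$ (from $i$ to $i+1$), $q_i=\frac{4i^2}{N^2}$ (from $i$ to $i-1$), $r_i=1-p_i-q_i$ (stay). $T$ is the transition matrix with $T_{ij}$ the probability to move from $j$ to $i$, and $\rho_m(j;i)=(T^m)_{ij}$ is the distribution at time $m$ started from $j$. The stationary distribution is $\pi_i=\binom{N/2}{i}^2/\binom{N}{N/2}$. $\|\rho-\pi\|_V=\frac12\sum_i|\rho_i-\pi_i|$ is total variation distance; $\log$ is the natural logarithm. *)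

From Stdlib Require Import Reals Lra Lia Arith.
Open Scope R_scope.

Definition half (N : nat) : nat := (N / 2)%nat.

Definition BL_p (N i : nat) : R :=
  4 * (INR (half N) - INR i) ^ 2 / (INR N) ^ 2.
Definition BL_q (N i : nat) : R := 4 * (INR i) ^ 2 / (INR N) ^ 2.
Definition BL_r (N i : nat) : R := 1 - BL_p N i - BL_q N i.

(* T_{ij} = probability to move from j to i (i, j in 0..N/2). *)
Definition BL_T (N i j : nat) : R :=
  if Nat.eqb i (S j) then BL_p N j
  else if Nat.eqb (S i) j then BL_q N j
  else if Nat.eqb i j then BL_r N j
  else 0.

Fixpoint BL_rho (N m j i : nat) : R :=
  match m with
  | O => if Nat.eqb i j then 1 else 0
  | S m' => sum_f_R0 (fun k => BL_T N i k * BL_rho N m' j k) (half N)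
  end.

Definition BL_pi (N i : nat) : R := (C (half N) i) ^ 2 / C N (half N).

Definition BL_TV (N m j : nat) : R :=
  / 2 * sum_f_R0 (fun i => Rabs (BL_rho N m j i - BL_pi N i)) (half N).

Definition BL_avgTV (N m : nat) : R :=
  sum_f_R0 (fun j => BL_pi N j * BL_TV N m j) (half N).

From Stdlib Require Import Reals Lra Lia Arith.
From mathcomp Require ssreflect ssrbool eqtype ssrnat fintype bigop binomial.

(* Let n = N/2 and d = rho_m(j;.) - pi.  The tails T_k = sum_(i >= k) d_i, k = 1..n,
   evolve under a tridiagonal matrix whose columns all sum to 1 - 2/n, whose columns have
   l1-norm at most 1, and whose square has nonnegative entries; hence the l1-norm of the
   tail vector decays like 3 (1 - 2/n)^m from its initial value, which is at most n.  The
   total variation distance is bounded by that l1-norm, and (1 - 2/n)^m <= exp (-2m/n)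
   turns the hypothesis on m into the bound 3 exp (-2c). *)

Module BinomialVandermonde.
Import ssreflect ssrbool eqtype ssrnat fintype bigop binomial.
Local Open Scope nat_scope.

Lemma fact_factorial n : fact n = n`!.
Proof. by elim: n => [//|n IH]; rewrite factS -IH. Qed.

Lemma C_binomial a k : k <= a -> C a k = INR 'C(a, k).
Proof.
move=> le_ka; rewrite /C !fact_factorial minusE -(bin_fact le_ka) !mult_INR.
have fact_neq0 i : INR i`! <> 0%R.
  by apply: not_0_INR; apply/eqP; rewrite -lt0n fact_gt0.
by field; split; apply: fact_neq0.
Qed.

Lemma INR_sum_ord (F : nat -> nat) k :
  INR (\sum_(i < k.+1) F i) = sum_f_R0 (fun i => INR (F i)) k.
Proof.
elim: k => [|k IH]; first by rewrite big_ord_recr big_ord0.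
by rewrite big_ord_recr /= plus_INR IH.
Qed.

Lemma sum_C_sqr n : sum_f_R0 (fun i => (C n i ^ 2)%R) n = C (Nat.add n n) n.
Proof.
rewrite plusE C_binomial ?leq_addr // -(Vandermonde n n n).
rewrite (INR_sum_ord (fun i => 'C(n, i) * 'C(n, n - i))).
apply: PartSum.sum_eq => i /leP le_in /=.
by rewrite bin_sub // C_binomial // mult_INR; ring.
Qed.

End BinomialVandermonde.

Ltac destruct_nat_tests :=
  repeat match goal with
  | |- context [Nat.eqb ?a ?b] => destruct (Nat.eqb_spec a b)
  | |- context [Nat.leb ?a ?b] => destruct (Nat.leb_spec a b)
  | |- context [Nat.ltb ?a ?b] => destruct (Nat.ltb_spec a b)
  end; cbn [andb] in *.

Fixpoint sum1n (f : nat -> R) (n : nat) : R :=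
  match n with O => 0 | S k => sum1n f k + f (S k) end.

Lemma sum1n_ext f g n :
  (forall k, (1 <= k <= n)%nat -> f k = g k) -> sum1n f n = sum1n g n.
Proof.
  induction n as [|n IH]; intros Hfg; simpl; [reflexivity|].
  rewrite IH, Hfg; [reflexivity | lia | intros; apply Hfg; lia].
Qed.

Lemma sum1n_le f g n :
  (forall k, (1 <= k <= n)%nat -> f k <= g k) -> sum1n f n <= sum1n g n.
Proof.
  induction n as [|n IH]; intros Hfg; simpl; [lra|].
  apply Rplus_le_compat; [apply IH; intros; apply Hfg | apply Hfg]; lia.
Qed.

Lemma sum1n_mult_r f c n : sum1n (fun k => f k * c) n = sum1n f n * c.
Proof. induction n as [|n IH]; simpl; [|rewrite IH]; ring. Qed.

Lemma sum1n_const c n : sum1n (fun _ => c) n = c * INR n.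
Proof. induction n as [|n IH]; simpl sum1n; [|rewrite IH, S_INR]; simpl; ring. Qed.

Lemma sum_f_R0_sum1n u n : sum_f_R0 u n = u 0%nat + sum1n u n.
Proof. induction n as [|n IH]; simpl; [|rewrite IH]; ring. Qed.

Lemma sum_f_R0_shift u n : sum_f_R0 (fun i => u (S i)) n = sum1n u (S n).
Proof. induction n as [|n IH]; simpl in *; [|rewrite IH]; ring. Qed.

Lemma sum1n_tridiag a b c f n :
  sum1n (fun k => a k * f (S k) + b k * f k + c k * f (pred k)) n
  = sum1n (fun l => f l * (a (pred l) + b l + c (S l))) n
    + a n * f (S n) - a 0%nat * f 1%nat + c 1%nat * f 0%nat - c (S n) * f n.
Proof. induction n as [|n IH]; simpl in *; [|rewrite IH]; ring. Qed.

Lemma half_sum_abs_diff_le G n : G 0%nat = 0 -> G (S n) = 0 ->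
  / 2 * sum_f_R0 (fun i => Rabs (G i - G (S i))) n <= sum1n (fun k => Rabs (G k)) n.
Proof.
  intros HG0 HGn.
  apply Rle_trans with (/ 2 * sum_f_R0 (fun i => Rabs (G i) + Rabs (G (S i))) n).
  { apply Rmult_le_compat_l; [lra|]. apply sum_Rle; intros i _.
    unfold Rminus; rewrite <- (Rabs_Ropp (G (S i))); apply Rabs_triang. }
  rewrite plus_sum, sum_f_R0_sum1n, (sum_f_R0_shift (fun i => Rabs (G i))).
  simpl sum1n; rewrite HG0, HGn, Rabs_R0; lra.
Qed.

Definition tail (n : nat) (x : nat -> R) (k : nat) : R :=
  sum_f_R0 (fun i => if (k <=? i)%nat then x i else 0) n.

Lemma tail_out n x k : (n < k)%nat -> tail n x k = 0.
Proof.
  intros Hk; unfold tail. rewrite (sum_eq _ (fun _ => 0)), sum_cte; [ring|].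
  intros i Hi; destruct_nat_tests; [lia | reflexivity].
Qed.

Lemma tail_S n x k : (k <= n)%nat -> tail n x k = x k + tail n x (S k).
Proof.
  induction n as [|n IH]; intros Hk.
  - replace k with 0%nat by lia. unfold tail; simpl; ring.
  - assert (Htop : forall j, tail (S n) x j
                   = tail n x j + (if (j <=? S n)%nat then x (S n) else 0)) by reflexivity.
    rewrite !Htop. destruct (Nat.eq_dec k (S n)) as [->|Hne].
    + rewrite (tail_out n x (S n)), (tail_out n x (S (S n))) by lia.
      destruct_nat_tests; try lia; ring.
    + rewrite IH by lia. destruct_nat_tests; try lia; ring.
Qed.

Lemma tail_0 n x : tail n x 0 = sum_f_R0 x n.
Proof. apply sum_eq; intros i _; reflexivity. Qed.

Lemma tail_minus n x y k : tail n (fun i => x i - y i) k = tail n x k - tail n y k.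
Proof.
  unfold tail; rewrite <- minus_sum; apply sum_eq; intros i _.
  destruct_nat_tests; ring.
Qed.

Lemma tail_prob_bounds n x k : (forall i, 0 <= x i) -> sum_f_R0 x n = 1 ->
  0 <= tail n x k <= 1.
Proof.
  intros Hx Hsum; rewrite <- Hsum, <- tail_0; split; unfold tail.
  - apply cond_pos_sum; intros i; destruct_nat_tests; [apply Hx | lra].
  - apply sum_Rle; intros i _; destruct_nat_tests; try lia; lra || apply Hx.
Qed.

Section BirthDeath.
Variables (n : nat) (p q : nat -> R).

Definition birth_death_step (x y : nat -> R) : Prop :=
  forall i, (i <= n)%nat ->
  y i = (if (1 <=? i)%nat then p (pred i) * x (pred i) else 0)
        + (1 - p i - q i) * x i
        + (if (i <? n)%nat then q (S i) * x (S i) else 0).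

Lemma birth_death_step_minus x y x' y' : birth_death_step x y -> birth_death_step x' y' ->
  birth_death_step (fun i => x i - x' i) (fun i => y i - y' i).
Proof. intros Hs Hs' i Hi; rewrite Hs, Hs' by exact Hi; destruct_nat_tests; ring. Qed.

Hypothesis p_top : p n = 0.

Lemma tail_birth_death_flux x y : birth_death_step x y -> forall k, (1 <= k <= n)%nat ->
  tail n y k = tail n x k + p (pred k) * x (pred k) - q k * x k.
Proof.
  intros Hs k Hk. remember (n - k)%nat as t eqn:Ht. revert k Hk Ht.
  induction t as [|t IH]; intros k Hk Ht.
  - replace k with n by lia.
    rewrite (tail_S n y), (tail_S n x), (tail_out n y), (tail_out n x), Hs, p_top by lia.
    destruct_nat_tests; try lia; ring.
  - rewrite (tail_S n y), (tail_S n x), IH, Hs by lia.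
    destruct_nat_tests; try lia; simpl pred; ring.
Qed.

Lemma tail_birth_death_mass x y : q 0%nat = 0 -> (1 <= n)%nat -> birth_death_step x y ->
  tail n y 0 = tail n x 0.
Proof.
  intros q_0 Hn Hs.
  rewrite (tail_S n y), (tail_S n x), (tail_birth_death_flux x y Hs 1), Hs, q_0 by lia.
  destruct_nat_tests; try lia; simpl pred; ring.
Qed.

Lemma tail_birth_death_step x y : birth_death_step x y -> forall k, (1 <= k <= n)%nat ->
  tail n y k = q k * tail n x (S k) + (1 - q k - p (pred k)) * tail n x k
               + p (pred k) * tail n x (pred k).
Proof.
  intros Hs k Hk.
  rewrite (tail_birth_death_flux x y Hs k), (tail_S n x (pred k)) by lia.
  replace (S (pred k)) with k by lia. rewrite (tail_S n x k) by lia. ring.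
Qed.

End BirthDeath.

Section Tridiagonal.
Variables (n : nat) (a b c : nat -> R).

Definition tridiag (f : nat -> R) (k : nat) : R :=
  if andb (1 <=? k)%nat (k <=? n)%nat then a k * f (S k) + b k * f k + c k * f (pred k)
  else 0.

Definition norm1 (f : nat -> R) : R := sum1n (fun k => Rabs (f k)) n.

Lemma tridiag_in f k : (1 <= k <= n)%nat ->
  tridiag f k = a k * f (S k) + b k * f k + c k * f (pred k).
Proof. intros Hk; unfold tridiag; destruct_nat_tests; [reflexivity | lia ..]. Qed.

Lemma tridiag_ext f g k : (forall i, f i = g i) -> tridiag f k = tridiag g k.
Proof. intros Hfg; unfold tridiag; rewrite !Hfg; reflexivity. Qed.

Lemma norm1_ext f g : (forall k, f k = g k) -> norm1 f = norm1 g.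
Proof. intros Hfg; apply sum1n_ext; intros k _; rewrite Hfg; reflexivity. Qed.

Lemma norm1_nonneg f : 0 <= norm1 f.
Proof.
  apply Rle_trans with (sum1n (fun _ => 0) n); [rewrite sum1n_const; lra|].
  apply sum1n_le; intros; apply Rabs_pos.
Qed.

Lemma tridiag_0 f : tridiag f 0 = 0.
Proof. reflexivity. Qed.

Lemma tridiag_top f : tridiag f (S n) = 0.
Proof. unfold tridiag; destruct_nat_tests; [lia | reflexivity ..]. Qed.

Hypotheses (a_0 : a 0%nat = 0) (c_top : c (S n) = 0).
Hypotheses (a_nonneg : forall k, 0 <= a k) (c_nonneg : forall k, 0 <= c k).

Lemma sum1n_tridiag_col g f :
  (forall l, (1 <= l <= n)%nat -> a (pred l) + b l + c (S l) = g) ->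
  f 0%nat = 0 -> f (S n) = 0 -> sum1n (tridiag f) n = g * sum1n f n.
Proof.
  intros Hcol Hf0 Hfn.
  rewrite (sum1n_ext _ _ _ (tridiag_in f)), sum1n_tridiag, a_0, c_top, Hf0, Hfn.
  rewrite (sum1n_ext _ (fun l => f l * g)), sum1n_mult_r; [ring|].
  intros l Hl; rewrite Hcol by exact Hl; reflexivity.
Qed.

Lemma norm1_tridiag_le f :
  (forall l, (1 <= l <= n)%nat -> a (pred l) + Rabs (b l) + c (S l) <= 1) ->
  f 0%nat = 0 -> f (S n) = 0 -> norm1 (tridiag f) <= norm1 f.
Proof.
  intros Hcol Hf0 Hfn; unfold norm1.
  apply Rle_trans with
    (sum1n (fun k => a k * Rabs (f (S k)) + Rabs (b k) * Rabs (f k)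
                     + c k * Rabs (f (pred k))) n).
  { apply sum1n_le; intros k Hk; rewrite tridiag_in by exact Hk.
    repeat (eapply Rle_trans; [apply Rabs_triang|]; apply Rplus_le_compat);
      rewrite Rabs_mult, ?(Rabs_pos_eq (a k)), ?(Rabs_pos_eq (c k)) by auto; lra. }
  rewrite (sum1n_tridiag a (fun k => Rabs (b k)) c (fun k => Rabs (f k))).
  rewrite a_0, c_top, Hf0, Hfn, Rabs_R0.
  assert (Hle : sum1n (fun l => Rabs (f l) * (a (pred l) + Rabs (b l) + c (S l))) n
                <= sum1n (fun l => Rabs (f l) * 1) n).
  { apply sum1n_le; intros l Hl. apply Rmult_le_compat_l; [apply Rabs_pos | auto]. }
  rewrite sum1n_mult_r in Hle; lra.
Qed.

Definition tridiag_sq_expanded (f : nat -> R) (k : nat) : R :=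
  a k * a (S k) * f (S (S k)) + a k * (b (S k) + b k) * f (S k)
  + (a k * c (S k) + b k * b k + c k * a (pred k)) * f k
  + c k * (b k + b (pred k)) * f (pred k) + c k * c (pred k) * f (pred (pred k)).

Hypotheses (a_top : a n = 0) (c_1 : c 1%nat = 0).

Lemma tridiag_sq_in f k : (1 <= k <= n)%nat ->
  tridiag (tridiag f) k = tridiag_sq_expanded f k.
Proof.
  intros Hk. unfold tridiag_sq_expanded. rewrite (tridiag_in _ k Hk).
  assert (Hup : a k * tridiag f (S k)
                = a k * (a (S k) * f (S (S k)) + b (S k) * f (S k) + c (S k) * f k)).
  { destruct (Nat.eq_dec k n) as [->|Hne]; [rewrite a_top; ring|].
    rewrite tridiag_in by lia; reflexivity. }
  assert (Hdown : c k * tridiag f (pred k)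
                  = c k * (a (pred k) * f k + b (pred k) * f (pred k)
                           + c (pred k) * f (pred (pred k)))).
  { destruct (Nat.eq_dec k 1) as [->|Hne]; [rewrite c_1; ring|].
    rewrite tridiag_in by lia. replace (S (pred k)) with k by lia; reflexivity. }
  rewrite Hup, Hdown, tridiag_in by exact Hk. ring.
Qed.

(* [tridiag] may have negative diagonal entries, but its square has a nonnegative matrix. *)
Lemma norm1_tridiag_sq_le g f :
  (forall l, (1 <= l <= n)%nat -> a (pred l) + b l + c (S l) = g) ->
  (forall k, (1 <= k <= n)%nat -> 0 <= a k * (b (S k) + b k)) ->
  (forall k, (1 <= k <= n)%nat -> 0 <= c k * (b k + b (pred k))) ->
  f 0%nat = 0 -> f (S n) = 0 -> norm1 (tridiag (tridiag f)) <= g * g * norm1 f.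
Proof.
  intros Hcol Hup Hdown Hf0 Hfn. set (F := fun k => Rabs (f k)).
  apply Rle_trans with (sum1n (tridiag (tridiag F)) n).
  { apply sum1n_le; intros k Hk. rewrite !tridiag_sq_in by exact Hk.
    unfold tridiag_sq_expanded, F.
    assert (Hmid : 0 <= a k * c (S k) + b k * b k + c k * a (pred k)).
    { pose proof (a_nonneg k); pose proof (c_nonneg (S k));
      pose proof (a_nonneg (pred k)); pose proof (c_nonneg k); nra. }
    assert (Hout : 0 <= a k * a (S k) /\ 0 <= c k * c (pred k)).
    { split; apply Rmult_le_pos; auto. }
    destruct Hout as [Hout1 Hout2]. specialize (Hup k Hk); specialize (Hdown k Hk).
    repeat (eapply Rle_trans; [apply Rabs_triang|]; apply Rplus_le_compat);
      rewrite Rabs_mult, Rabs_pos_eq by assumption; lra. }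
  assert (HF0 : F 0%nat = 0) by (unfold F; rewrite Hf0; apply Rabs_R0).
  assert (HFn : F (S n) = 0) by (unfold F; rewrite Hfn; apply Rabs_R0).
  rewrite (sum1n_tridiag_col g), (sum1n_tridiag_col g F) by auto using tridiag_0, tridiag_top.
  unfold norm1, F; lra.
Qed.

End Tridiagonal.

Lemma two_step_decay (u : nat -> R) g : 0 <= g -> 1 <= 3 * g -> 0 <= u 0%nat ->
  (forall m, u (S m) <= u m) -> (forall m, u (S (S m)) <= g * g * u m) ->
  forall m, u m <= 3 * g ^ m * u 0%nat.
Proof.
  intros Hg H3g Hu0 Hone Htwo.
  assert (Heven : forall t, u (2 * t)%nat <= g ^ (2 * t) * u 0%nat).
  { induction t as [|t IH]; [simpl; lra|].
    replace (2 * S t)%nat with (S (S (2 * t))) by lia.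
    eapply Rle_trans; [apply Htwo|].
    replace (g ^ S (S (2 * t)) * u 0%nat) with (g * g * (g ^ (2 * t) * u 0%nat))
      by (simpl; ring).
    apply Rmult_le_compat_l; [apply Rmult_le_pos|]; assumption. }
  intros m. destruct (Nat.Even_or_Odd m) as [[t ->]|[t ->]].
  - pose proof (Rmult_le_pos _ _ (pow_le g (2 * t) Hg) Hu0). specialize (Heven t); lra.
  - replace (2 * t + 1)%nat with (S (2 * t)) by lia.
    eapply Rle_trans; [apply Hone|]. eapply Rle_trans; [apply Heven|].
    pose proof (Rmult_le_pos _ _ (pow_le g (2 * t) Hg) Hu0).
    replace (g ^ S (2 * t)) with (g * g ^ (2 * t)) by reflexivity. nra.
Qed.

Lemma C_pos a k : 0 < C a k.
Proof.
  unfold C. apply Rdiv_lt_0_compat; [apply INR_fact_lt_0|].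
  apply Rmult_lt_0_compat; apply INR_fact_lt_0.
Qed.

Lemma C_succ_mult a i : (i < a)%nat -> C a (S i) * INR (S i) = C a i * INR (a - i).
Proof.
  intros Hi. unfold C.
  replace (a - i)%nat with (S (a - S i)) by lia.
  change (fact (S i)) with (S i * fact i)%nat.
  change (fact (S (a - S i))) with (S (a - S i) * fact (a - S i))%nat.
  rewrite !mult_INR.
  pose proof (INR_fact_lt_0 i); pose proof (INR_fact_lt_0 (a - S i)).
  pose proof (lt_0_INR (S i) ltac:(lia)); pose proof (lt_0_INR (S (a - S i)) ltac:(lia)).
  field; repeat split; lra.
Qed.

Lemma BL_pi_nonneg N i : 0 <= BL_pi N i.
Proof.
  unfold BL_pi, Rdiv. apply Rmult_le_pos; [apply pow2_ge_0|].
  apply Rlt_le, Rinv_0_lt_compat, C_pos.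
Qed.

Lemma INR_pred k : (1 <= k)%nat -> INR (pred k) = INR k - 1.
Proof. intros Hk. destruct k as [|k]; [lia|]. rewrite S_INR; simpl; ring. Qed.

Lemma half_double n : half (n + n) = n.
Proof. unfold half. replace (n + n)%nat with (n * 2)%nat by lia. apply Nat.div_mul; lia. Qed.

Lemma sum_band_mul (P Q D x : nat -> R) i M :
  sum_f_R0 (fun k => (if Nat.eqb i (S k) then P k else if Nat.eqb (S i) k then Q k
                      else if Nat.eqb i k then D k else 0) * x k) M
  = (if andb (1 <=? i)%nat (i <=? S M)%nat then P (pred i) * x (pred i) else 0)
    + (if (i <=? M)%nat then D i * x i else 0)
    + (if (S i <=? M)%nat then Q (S i) * x (S i) else 0).
Proof.
  induction M as [|M IH].
  - simpl. destruct i as [|[|i]]; simpl; ring.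
  - rewrite tech5, IH. destruct_nat_tests; try (exfalso; lia); subst; simpl; try ring;
      first [replace i with (S M) by lia | replace i with M by lia
            | replace i with (S (S M)) by lia]; simpl; ring.
Qed.

Lemma sum_delta j n :
  sum_f_R0 (fun i => if Nat.eqb i j then 1 else 0) n = if (j <=? n)%nat then 1 else 0.
Proof.
  induction n as [|n IH]; [destruct j; simpl; lra|].
  rewrite tech5, IH. destruct_nat_tests; try (exfalso; lia); lra.
Qed.

Section BernoulliLaplace.
Variable n : nat.
Hypothesis n_ge3 : (3 <= n)%nat.
Local Notation N := (n + n)%nat.

Let n_ge3_R : 3 <= INR n.
Proof. apply (le_INR 3) in n_ge3; simpl in n_ge3; lra. Qed.

Lemma BL_p_eq i : BL_p N i = (INR n - INR i) ^ 2 / INR n ^ 2.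
Proof. unfold BL_p. rewrite half_double, plus_INR. field. lra. Qed.

Lemma BL_q_eq i : BL_q N i = INR i ^ 2 / INR n ^ 2.
Proof. unfold BL_q. rewrite plus_INR. field. lra. Qed.

Lemma BL_p_top : BL_p N n = 0.
Proof. rewrite BL_p_eq. unfold Rdiv. ring. Qed.

Lemma BL_q_0 : BL_q N 0 = 0.
Proof. rewrite BL_q_eq. simpl. unfold Rdiv. ring. Qed.

Lemma BL_p_nonneg i : 0 <= BL_p N i.
Proof. rewrite BL_p_eq. apply Rle_mult_inv_pos; [apply pow2_ge_0 | nra]. Qed.

Lemma BL_q_nonneg i : 0 <= BL_q N i.
Proof. rewrite BL_q_eq. apply Rle_mult_inv_pos; [apply pow2_ge_0 | nra]. Qed.

Lemma BL_pi_sum : sum_f_R0 (BL_pi N) n = 1.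
Proof.
  unfold BL_pi. rewrite half_double.
  transitivity (sum_f_R0 (fun i => C n i ^ 2) n * / C N n).
  { rewrite Rmult_comm, scal_sum. apply sum_eq; intros; unfold Rdiv; ring. }
  rewrite BinomialVandermonde.sum_C_sqr. field. pose proof (C_pos N n); lra.
Qed.

Lemma BL_detailed_balance i : (i < n)%nat ->
  BL_pi N (S i) * BL_q N (S i) = BL_pi N i * BL_p N i.
Proof.
  intros Hi. rewrite BL_p_eq, BL_q_eq. unfold BL_pi. rewrite half_double.
  pose proof (C_succ_mult n i Hi) as Hratio. rewrite minus_INR in Hratio by lia.
  pose proof (C_pos N n).
  replace (C n (S i) ^ 2 / C N n * (INR (S i) ^ 2 / INR n ^ 2))
    with ((C n (S i) * INR (S i)) ^ 2 / (C N n * INR n ^ 2)) by (field; lra).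
  rewrite Hratio. field. lra.
Qed.

Lemma BL_pi_step : birth_death_step n (BL_p N) (BL_q N) (BL_pi N) (BL_pi N).
Proof.
  intros i Hi.
  assert (Hin : (if (1 <=? i)%nat then BL_p N (pred i) * BL_pi N (pred i) else 0)
                = BL_q N i * BL_pi N i).
  { destruct_nat_tests.
    - rewrite Rmult_comm, <- BL_detailed_balance by lia.
      replace (S (pred i)) with i by lia. ring.
    - replace i with 0%nat by lia. rewrite BL_q_0. ring. }
  assert (Hout : (if (i <? n)%nat then BL_q N (S i) * BL_pi N (S i) else 0)
                 = BL_p N i * BL_pi N i).
  { destruct_nat_tests.
    - rewrite Rmult_comm, BL_detailed_balance by lia. ring.
    - replace i with n by lia. rewrite BL_p_top. ring. }
  rewrite Hin, Hout. ring.
Qed.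

Lemma BL_rho_step m j :
  birth_death_step n (BL_p N) (BL_q N) (BL_rho N m j) (BL_rho N (S m) j).
Proof.
  intros i Hi. simpl BL_rho. unfold BL_T. rewrite half_double, sum_band_mul.
  unfold BL_r. destruct_nat_tests; try (exfalso; lia); simpl; ring.
Qed.

(* The coefficients of [tail_birth_death_step], with the entries pointing at the tails
   T_0 and T_(n+1), which always vanish for a deviation, set to 0. *)
Definition tail_up (k : nat) : R :=
  if andb (1 <=? k)%nat (k <? n)%nat then BL_q N k else 0.
Definition tail_diag (k : nat) : R := 1 - BL_q N k - BL_p N (pred k).
Definition tail_down (k : nat) : R :=
  if andb (2 <=? k)%nat (k <=? n)%nat then BL_p N (pred k) else 0.

Local Notation tail_op := (tridiag n tail_up tail_diag tail_down).

Lemma tail_up_pred l : (1 <= l <= n)%nat -> tail_up (pred l) = BL_q N (pred l).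
Proof.
  intros Hl; unfold tail_up; destruct_nat_tests; try reflexivity; try lia.
  replace (pred l) with 0%nat by lia. rewrite BL_q_0; reflexivity.
Qed.

Lemma tail_down_succ l : (1 <= l <= n)%nat -> tail_down (S l) = BL_p N l.
Proof.
  intros Hl; unfold tail_down; destruct_nat_tests; try reflexivity; try lia.
  replace l with n by lia. rewrite BL_p_top; reflexivity.
Qed.

Lemma tail_up_nonneg k : 0 <= tail_up k.
Proof. unfold tail_up; destruct andb; [apply BL_q_nonneg | lra]. Qed.

Lemma tail_down_nonneg k : 0 <= tail_down k.
Proof. unfold tail_down; destruct andb; [apply BL_p_nonneg | lra]. Qed.

Lemma tail_up_top : tail_up n = 0.
Proof. unfold tail_up; destruct_nat_tests; [lia | reflexivity ..]. Qed.

Lemma tail_down_top : tail_down (S n) = 0.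
Proof. unfold tail_down; destruct_nat_tests; [lia | reflexivity ..]. Qed.

Lemma tail_coeffs_col_sum l : (1 <= l <= n)%nat ->
  tail_up (pred l) + tail_diag l + tail_down (S l) = 1 - 2 / INR n.
Proof.
  intros Hl. rewrite tail_up_pred, tail_down_succ by exact Hl. unfold tail_diag.
  rewrite !BL_p_eq, !BL_q_eq, INR_pred by lia. field. lra.
Qed.

Lemma tail_coeffs_col_abs l : (1 <= l <= n)%nat ->
  tail_up (pred l) + Rabs (tail_diag l) + tail_down (S l) <= 1.
Proof.
  intros Hl. pose proof (tail_coeffs_col_sum l Hl) as Hsum.
  rewrite tail_up_pred, tail_down_succ in * by exact Hl.
  assert (Hn2 : 0 < 2 / INR n) by (apply Rdiv_lt_0_compat; lra).
  destruct (Rle_or_lt 0 (tail_diag l)) as [Hpos|Hneg];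
    [rewrite Rabs_pos_eq by exact Hpos; lra | rewrite Rabs_left by exact Hneg].
  unfold tail_diag. rewrite !BL_p_eq, !BL_q_eq, INR_pred by lia.
  assert (L1 : 1 <= INR l) by (apply (le_INR 1); lia).
  assert (L2 : INR l <= INR n) by (apply le_INR; lia).
  apply Rmult_le_reg_r with (INR n ^ 2); [nra|].
  field_simplify; [|lra].
  assert (0 <= (INR l - 1) * (INR n - INR l)) by (apply Rmult_le_pos; lra). nra.
Qed.

Lemma tail_diag_pair k : (1 <= k)%nat -> (S k <= n)%nat ->
  0 <= tail_diag (S k) + tail_diag k.
Proof.
  intros H1 H2. unfold tail_diag. simpl pred.
  rewrite !BL_p_eq, !BL_q_eq, S_INR, INR_pred by lia.
  assert (L1 : 1 <= INR k) by (apply (le_INR 1); lia).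
  assert (L2 : INR k + 1 <= INR n) by (rewrite <- S_INR; apply le_INR; lia).
  apply Rmult_le_reg_r with (INR n ^ 2); [nra|].
  field_simplify; [|lra].
  assert (0 <= (INR k - 1) * (INR n - 1 - INR k)) by (apply Rmult_le_pos; lra). nra.
Qed.

Definition deviation (j m : nat) (i : nat) : R := BL_rho N m j i - BL_pi N i.

Definition dev_tail (j m : nat) (k : nat) : R :=
  if andb (1 <=? k)%nat (k <=? n)%nat then tail n (deviation j m) k else 0.

Lemma dev_tail_top j m : dev_tail j m (S n) = 0.
Proof. unfold dev_tail; destruct_nat_tests; [lia | reflexivity ..]. Qed.

Lemma deviation_step j m :
  birth_death_step n (BL_p N) (BL_q N) (deviation j m) (deviation j (S m)).
Proof. apply birth_death_step_minus; [apply BL_rho_step | apply BL_pi_step]. Qed.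

Lemma deviation_mass j m : (j <= n)%nat -> tail n (deviation j m) 0 = 0.
Proof.
  intros Hj. induction m as [|m IH].
  - unfold deviation. rewrite tail_minus, !tail_0, BL_pi_sum. simpl BL_rho.
    rewrite sum_delta. destruct_nat_tests; [ring | lia].
  - rewrite <- IH. apply (tail_birth_death_mass n (BL_p N) (BL_q N) BL_p_top).
    + apply BL_q_0.
    + lia.
    + apply deviation_step.
Qed.

Lemma dev_tail_step j m k : (j <= n)%nat ->
  dev_tail j (S m) k = tail_op (dev_tail j m) k.
Proof.
  intros Hj. unfold dev_tail at 1, tridiag.
  destruct (andb (1 <=? k)%nat (k <=? n)%nat) eqn:Hk; [|reflexivity].
  apply andb_prop in Hk as [Hk1 Hk2]. apply Nat.leb_le in Hk1, Hk2.
  rewrite (tail_birth_death_step n _ _ BL_p_top _ _ (deviation_step j m)) by lia.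
  assert (Hup : tail_up k * dev_tail j m (S k) = BL_q N k * tail n (deviation j m) (S k)).
  { unfold tail_up, dev_tail. destruct_nat_tests; try (exfalso; lia); try ring.
    replace k with n by lia. rewrite tail_out by lia. ring. }
  assert (Hdown : tail_down k * dev_tail j m (pred k)
                  = BL_p N (pred k) * tail n (deviation j m) (pred k)).
  { unfold tail_down, dev_tail. destruct_nat_tests; try (exfalso; lia); try ring.
    replace (pred k) with 0%nat by lia. rewrite deviation_mass by exact Hj. ring. }
  assert (Hmid : dev_tail j m k = tail n (deviation j m) k).
  { unfold dev_tail. destruct_nat_tests; [reflexivity | lia ..]. }
  rewrite Hup, Hdown, Hmid. unfold tail_diag. ring.
Qed.

Lemma norm1_dev_tail_0 j : (j <= n)%nat -> norm1 n (dev_tail j 0) <= INR n.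
Proof.
  intros Hj. unfold norm1. rewrite <- (Rmult_1_l (INR n)), <- sum1n_const.
  apply sum1n_le; intros k Hk. unfold dev_tail, deviation.
  destruct_nat_tests; try lia. rewrite tail_minus.
  assert (Hrho : 0 <= tail n (BL_rho N 0 j) k <= 1).
  { apply tail_prob_bounds.
    - intros i; simpl; destruct_nat_tests; lra.
    - simpl BL_rho; rewrite sum_delta; destruct_nat_tests; [reflexivity | lia]. }
  assert (Hpi : 0 <= tail n (BL_pi N) k <= 1).
  { apply tail_prob_bounds; [apply BL_pi_nonneg | apply BL_pi_sum]. }
  apply Rabs_le; lra.
Qed.

Lemma BL_TV_le_norm1 j m : (j <= n)%nat -> BL_TV N m j <= norm1 n (dev_tail j m).
Proof.
  intros Hj. unfold BL_TV. rewrite half_double.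
  set (G := tail n (deviation j m)).
  rewrite (sum_eq _ (fun i => Rabs (G i - G (S i)))).
  2: { intros i Hi. unfold G. rewrite (tail_S n _ i) by exact Hi. unfold deviation.
       f_equal; ring. }
  eapply Rle_trans; [apply half_sum_abs_diff_le|].
  - apply deviation_mass, Hj.
  - apply tail_out; lia.
  - unfold norm1, dev_tail. right. apply sum1n_ext; intros k Hk.
    destruct_nat_tests; [reflexivity | lia ..].
Qed.

Lemma norm1_dev_tail_succ j m : (j <= n)%nat ->
  norm1 n (dev_tail j (S m)) <= norm1 n (dev_tail j m).
Proof.
  intros Hj. rewrite (norm1_ext n (dev_tail j (S m)) (tail_op (dev_tail j m)))
    by (intros; apply dev_tail_step, Hj).
  apply norm1_tridiag_le; auto using tail_up_nonneg, tail_down_nonneg, tail_down_top,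
    tail_coeffs_col_abs, dev_tail_top.
Qed.

Lemma norm1_dev_tail_succ_succ j m : (j <= n)%nat ->
  norm1 n (dev_tail j (S (S m)))
  <= (1 - 2 / INR n) * (1 - 2 / INR n) * norm1 n (dev_tail j m).
Proof.
  intros Hj. rewrite (norm1_ext n _ (tail_op (tail_op (dev_tail j m)))).
  2: { intros k. rewrite dev_tail_step by exact Hj.
       apply tridiag_ext; intros i; apply dev_tail_step, Hj. }
  apply norm1_tridiag_sq_le; auto using tail_up_nonneg, tail_down_nonneg, tail_up_top,
    tail_down_top, tail_coeffs_col_sum, dev_tail_top.
  - intros k Hk. unfold tail_up. destruct_nat_tests; try lra.
    apply Rmult_le_pos; [apply BL_q_nonneg | apply tail_diag_pair; lia].
  - intros k Hk. unfold tail_down. destruct_nat_tests; try lra.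
    apply Rmult_le_pos; [apply BL_p_nonneg|].
    replace k with (S (pred k)) at 1 by lia. apply tail_diag_pair; lia.
Qed.

Lemma BL_TV_le j m : (j <= n)%nat -> BL_TV N m j <= 3 * INR n * (1 - 2 / INR n) ^ m.
Proof.
  intros Hj. eapply Rle_trans; [apply BL_TV_le_norm1, Hj|].
  assert (Hg : 2 / INR n <= 2 / 3).
  { apply Rmult_le_compat_l; [lra|]. apply Rinv_le_contravar; lra. }
  pose proof (two_step_decay (fun m => norm1 n (dev_tail j m)) (1 - 2 / INR n))
    as Hdecay.
  specialize (Hdecay ltac:(lra) ltac:(lra) (norm1_nonneg _ _)
               (fun m => norm1_dev_tail_succ j m Hj)
               (fun m => norm1_dev_tail_succ_succ j m Hj) m); simpl in Hdecay.
  pose proof (pow_le (1 - 2 / INR n) m ltac:(lra)).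
  pose proof (norm1_dev_tail_0 j Hj). nra.
Qed.

Lemma BL_avgTV_le m : BL_avgTV N m <= 3 * INR n * (1 - 2 / INR n) ^ m.
Proof.
  unfold BL_avgTV. rewrite half_double.
  apply Rle_trans with (sum_f_R0 (fun j => BL_pi N j * (3 * INR n * (1 - 2 / INR n) ^ m)) n).
  - apply sum_Rle; intros j Hj.
    apply Rmult_le_compat_l; [apply BL_pi_nonneg | apply BL_TV_le, Hj].
  - rewrite <- scal_sum, BL_pi_sum. lra.
Qed.

End BernoulliLaplace.

Lemma exp_le_compat x y : x <= y -> exp x <= exp y.
Proof. intros [Hlt|Heq]; [apply Rlt_le, exp_increasing, Hlt | rewrite Heq; apply Rle_refl]. Qed.

Lemma pow_le_exp x m : 0 <= 1 - x -> (1 - x) ^ m <= exp (- (INR m * x)).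
Proof.
  intros Hx.
  replace (- (INR m * x)) with (INR m * ln (exp (- x))) by (rewrite ln_exp; ring).
  change (exp (INR m * ln (exp (- x)))) with (Rpower (exp (- x)) (INR m)).
  rewrite Rpower_pow by apply exp_pos.
  apply pow_incr. split; [exact Hx|]. pose proof (exp_ineq1_le (- x)); lra.
Qed.

Lemma mixing_time_estimate n m c : (2 <= n)%nat ->
  INR m >= / 4 * INR (n + n) * ln (INR (n + n)) + (c / 2 - ln 2 / 8) * INR (n + n) ->
  INR n * (1 - 2 / INR n) ^ m <= exp (- (2 * c)).
Proof.
  intros Hn Hm. rewrite plus_INR in Hm.
  assert (Hx : 2 <= INR n) by (apply (le_INR 2); exact Hn). set (x := INR n) in *.
  assert (Hln2 : 0 < ln 2) by (rewrite <- ln_1; apply ln_increasing; lra).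
  assert (Hexponent : - (INR m * (2 / x)) <= - ln x + - (2 * c) + - (ln 2 / 2)).
  { replace (ln (x + x)) with (ln 2 + ln x) in Hm
      by (rewrite <- ln_mult by lra; f_equal; ring).
    assert (Hpos : 0 < 2 / x) by (apply Rdiv_lt_0_compat; lra).
    assert (E : INR m * (2 / x) - (ln x + 2 * c + ln 2 / 2)
                = 2 / x * (INR m - (/ 4 * (x + x) * (ln 2 + ln x)
                                    + (c / 2 - ln 2 / 8) * (x + x)))) by (field; lra).
    nra. }
  apply Rle_trans with (x * exp (- ln x + - (2 * c) + - (ln 2 / 2))).
  { apply Rmult_le_compat_l; [lra|]. eapply Rle_trans; [apply pow_le_exp|].
    - assert (2 / x <= 1) by (apply Rmult_le_reg_r with x; [lra|]; field_simplify; lra). lra.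
    - apply exp_le_compat, Hexponent. }
  rewrite !exp_plus, exp_Ropp, exp_ln by lra.
  assert (Hsqrt2 : exp (- (ln 2 / 2)) <= 1).
  { rewrite <- exp_0. apply exp_le_compat. lra. }
  pose proof (exp_pos (- (2 * c))).
  replace (x * (/ x * exp (- (2 * c)) * exp (- (ln 2 / 2))))
    with (exp (- (2 * c)) * exp (- (ln 2 / 2))) by (field; lra).
  nra.
Qed.

Theorem theorem5p1 :
  exists A : R, 0 < A /\
    forall (N : nat), (6 <= N)%nat -> Nat.Even N ->
    forall (c : R), 0 < c ->
    forall (m : nat),
      INR m >= / 4 * INR N * ln (INR N) + (c / 2 - ln 2 / 8) * INR N ->
      BL_avgTV N m <= A * exp (- (2 * c)).
Proof.
  exists 3. split; [lra|].
  intros N HN [n ->] c _ m Hm. replace (2 * n)%nat with (n + n)%nat in * by lia.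
  eapply Rle_trans; [apply BL_avgTV_le; lia|].
  rewrite Rmult_assoc. apply Rmult_le_compat_l; [lra|].
  apply mixing_time_estimate; [lia | exact Hm].
Qed.
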